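(* Let $a\in K$ and let $b_1,\dots,b_\ell\notin K$ be distinct ($\ell\ge 1$). Suppose that either $(a,b_i)\in T$ for all $i$, or there are $a_1,\dots,a_\ell\in K$ with $(a_i,b_i)\in T$ and $a_i\circ b_i=a$ for all $i$. Then $\pi\ge\ell(n-2q-m+1)+q-m-1$.
   Context: $G$ is a set of size $n$ and $G(\circ)$, $G(\ast)$ are distinct groups on $G$ with the same identity element. $\mathrm{diff}(\circ,\ast)=\{(a,b):a\circ b\ne a\ast b\}$, $\mathrm{dist}(\circ,\ast)=|\mathrm{diff}(\circ,\ast)|$, $\mathrm{dist}_a=|\{b:a\circ b\ne a\ast b\}|$; $H=\{a:\mathrm{dist}_a=0\}$, $h=|H|$; $K=\{a:\mathrm{dist}_a<n/3\}$, $k=|K|$; $m=\min\{\mathrm{dist}_a:\mathrm{dist}_a>0\}$. Standing assumption: $m\ge 3$. Let $q=\lceil n/3\rceil$ and the profit $\pi=\mathrm{dist}(\circ,\ast)-((k-h)m+(n-k)q)$. Let $T=\{(a,b)\in\mathrm{diff}(\circ,\ast):a\in K,\ a\circ b\in K\}$. *)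

From HB Require Import structures.
From mathcomp Require Import all_boot all_order all_algebra.
Set Implicit Arguments. Unset Strict Implicit. Unset Printing Implicit Defensive.

Section Defs.
Variable T : finType.

Definition is_group (op : T -> T -> T) (e : T) : Prop :=
  [/\ associative op, left_id e op, right_id e op &
      forall x, exists y, op x y = e /\ op y x = e].

Variables (o s : T -> T -> T).

Definition diffset : {set T * T} := [set p | o p.1 p.2 != s p.1 p.2].
Definition dist : nat := #|diffset|.
Definition dist_at (a : T) : nat := #|[set b | o a b != s a b]|.
Definition Hset : {set T} := [set a | dist_at a == 0%N].
(* dist_a < n/3  <->  3 * dist_a < n *)
Definition Kset : {set T} := [set a | 3 * dist_at a < #|T|].
(* m = min { dist_a : dist_a > 0 }; the default #|T| is never reached
   when the two operations differ, since dist_a <= #|T|. *)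
Definition mmin : nat := \big[minn/#|T|]_(a | 0 < dist_at a) dist_at a.
(* q = ceil(n/3) *)
Definition qceil : nat := (#|T| + 2) %/ 3.
Definition profit : int :=
  (dist%:Z - ((#|Kset|%:Z - #|Hset|%:Z) * mmin%:Z
              + (#|T|%:Z - #|Kset|%:Z) * qceil%:Z))%R.
Definition Tset : {set T * T} :=
  [set p in diffset | (p.1 \in Kset) && (o p.1 p.2 \in Kset)].
End Defs.

From HB Require Import structures.
From mathcomp Require Import all_boot all_order all_algebra.
From mathcomp Require Import zify.
Import Order.TTheory GRing.Theory Num.Theory.

Local Open Scope ring_scope.

(* The profit is the sum over all x of the nonnegative terms dist_x - m on
   K \ H, 0 on H and dist_x - q off K.  Whenever x o y <> x * y, the three sets
   of disagreement of y, of x o y and of x (shifted by y) cover the group, so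
   n <= dist_x + dist_y + dist_(x o y).  Applied to the triples {a, b_i, c_i},
   with c_i = a o b_i resp. c_i = a_i, this makes the terms of b_i and c_i add
   up to at least n - dist_a - m - q; summing over i, adding the term of a and
   using dist_a <= q - 1 gives the bound. *)

Section GroupCancellation.
Context {T : finType} {op : T -> T -> T} {e : T} (G : is_group op e).

Lemma group_mulI : right_injective op.
Proof.
move=> x; case: G => opA op1 _ opV; case: (opV x) => y [_ yx] u v E.
by rewrite -(op1 u) -(op1 v) -yx -!opA E.
Qed.

Lemma group_mulIr : left_injective op.
Proof.
move=> x; case: G => opA _ op1 opV; case: (opV x) => y [xy _] u v /= E.
by rewrite -(op1 u) -(op1 v) -xy !opA E.
Qed.

Lemma group_id_of_mul_eq x y : op x y = x -> y = e.
Proof. by case: (G) => _ _ op1 _ xy_x; apply: (group_mulI x); rewrite op1. Qed.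

End GroupCancellation.

Set Implicit Arguments.
Unset Strict Implicit.
Unset Printing Implicit Defensive.

Section Profit.
Variables (T : finType) (o s : T -> T -> T).

Local Notation d := (dist_at o s).
Local Notation K := (Kset o s).
Local Notation H := (Hset o s).
Local Notation m := (mmin o s).
Local Notation q := (qceil T).

Lemma Hset_sub_Kset : H \subset K.
Proof.
apply/subsetP => x; rewrite !inE => /eqP ->; rewrite muln0.
by apply/card_gt0P; exists x.
Qed.

Lemma mmin_le_dist_at x : (0 < d x)%N -> (m <= d x)%N.
Proof.
move=> dx_gt0.
by have := @bigmin_le_cond _ nat _ #|T| x (fun y => 0 < d y)%N d dx_gt0; rewrite minEnat.
Qed.

Lemma dist_at_lt_qceil x : x \in K -> (d x < q)%N.
Proof. by rewrite inE /qceil; lia. Qed.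

Definition profit_weight x : nat :=
  if x \in K then (if x \in H then 0 else m) else q.

Definition profit_term x : int := (d x)%:Z - (profit_weight x)%:Z.

Lemma profit_term_ge0 x : 0 <= profit_term x.
Proof.
rewrite /profit_term /profit_weight subr_ge0 lez_nat.
case: ifPn => [_ | ]; last by rewrite inE /qceil; lia.
case: ifPn => [// | ]; rewrite inE => dx_neq0.
by rewrite mmin_le_dist_at // lt0n.
Qed.

Lemma profit_term_Kset x : x \in K -> (d x)%:Z - m%:Z <= profit_term x.
Proof.
by rewrite /profit_term /profit_weight => ->; case: (x \in H) => /=; lia.
Qed.

Lemma profit_term_notKset x : x \notin K -> profit_term x = (d x)%:Z - q%:Z.
Proof. by rewrite /profit_term /profit_weight => /negbTE ->. Qed.

Lemma dist_sum : dist o s = (\sum_x d x)%N.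
Proof.
rewrite /dist -sum1_card.
under [RHS]eq_bigr => x _ do rewrite /dist_at -sum1_card.
by rewrite pair_big_dep; apply: eq_bigl => -[x y]; rewrite !inE.
Qed.

Lemma sum_profit_weight :
  (\sum_x profit_weight x = (#|K| - #|H|) * m + (#|T| - #|K|) * q)%N.
Proof.
rewrite (bigID (mem K)) /=; congr (_ + _).
- rewrite (bigID (mem H)) /= big1 => [|x /andP[xK xH]]; last first.
    by rewrite /profit_weight xK xH.
  rewrite add0n (eq_bigr (fun=> m)) => [|x /andP[xK /negbTE xH]]; last first.
    by rewrite /profit_weight xK xH.
  rewrite sum_nat_const -(cardsDS Hset_sub_Kset); congr (_ * _).
  by apply: eq_card => x; rewrite in_setD [RHS]andbC.
- rewrite (eq_bigr (fun=> q)) => [|x /negbTE xK]; last by rewrite /profit_weight xK.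
  rewrite sum_nat_const -(cardsC K) addKn; congr (_ * _).
  by apply: eq_card => x; rewrite in_setC.
Qed.

Lemma profit_sum : profit o s = \sum_x profit_term x.
Proof.
rewrite /profit sumrB -!(big_morph Posz PoszD (erefl 0%R)) -dist_sum.
rewrite sum_profit_weight PoszD !PoszM -!subzn ?(subset_leq_card Hset_sub_Kset) ?max_card //.
Qed.

Lemma profit_ge_sum_uniq (r : seq T) :
  uniq r -> \sum_(x <- r) profit_term x <= profit o s.
Proof.
move=> r_uniq; rewrite profit_sum big_uniq // [leRHS](bigID (mem r)) /=.
by rewrite lerDl sumr_ge0 // => x _; exact: profit_term_ge0.
Qed.

Lemma Tset_mul_in_Kset x y : (x, y) \in Tset o s -> o x y \in K.
Proof. by rewrite in_set => /andP[_ /andP[]]. Qed.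

Lemma profit_ge_of_triples (l : nat) (a : T) (b c : 'I_l -> T) :
  (1 <= l)%N -> a \in K -> (forall i, b i \notin K) -> injective b ->
  (forall i, c i \in K) -> (forall i, c i != a) -> injective c ->
  (forall i, #|T| <= d a + d (b i) + d (c i))%N ->
  profit o s >=
    l%:Z * (#|T|%:Z - 2 * q%:Z - m%:Z + 1) + q%:Z - m%:Z - 1.
Proof.
move=> l_gt0 aK bNK b_inj cK c_neq_a c_inj covering; set n := #|T|.
have r_uniq : uniq (a :: codom c ++ codom b).
  rewrite /= mem_cat negb_or cat_uniq !map_inj_uniq // -enumT enum_uniq.
  rewrite andbT -andbA; apply/and3P; split.
  - by apply/codomP => -[i a_ci]; move: (c_neq_a i); rewrite -a_ci eqxx.
  - by apply/codomP => -[i a_bi]; move: (bNK i); rewrite -a_bi aK.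
  - apply/hasPn => _ /codomP[i ->]; apply/codomP => -[j bi_cj].
    by move: (bNK i); rewrite bi_cj cK.
have pair_bound i :
    n%:Z - (d a)%:Z - m%:Z - q%:Z <= profit_term (c i) + profit_term (b i).
  have := profit_term_Kset (cK i); rewrite (profit_term_notKset (bNK i)).
  by have := covering i; lia.
apply: le_trans (profit_ge_sum_uniq r_uniq).
rewrite big_cons big_cat /= /codom /image_mem !big_map -big_split /=.
rewrite -enumT big_enum /=.
apply: le_trans (lerD (profit_term_Kset aK) (ler_sum _ (fun i _ => pair_bound i))).
rewrite sumr_const card_ord -[_ *+ l]mulr_natr [l%:R]natz.
have da_lt_q := dist_at_lt_qceil aK.
have : 0 <= (l%:Z - 1) * (q%:Z - (d a)%:Z - 1) by rewrite mulr_ge0 //; lia.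
lia.
Qed.

End Profit.

Section GroupPair.
Variables (T : finType) (o s : T -> T -> T) (e : T).
Hypotheses (Go : is_group o e) (Gs : is_group s e).

Local Notation d := (dist_at o s).
Local Notation K := (Kset o s).

Lemma dist_at_id : d e = 0%N.
Proof.
case: (Go) (Gs) => _ o1 _ _ [_ s1 _ _]; apply/eqP; rewrite cards_eq0.
by apply/eqP/setP => x; rewrite !inE o1 s1 eqxx.
Qed.

Lemma id_in_Kset : e \in K.
Proof. by rewrite inE dist_at_id muln0; apply/card_gt0P; exists e. Qed.

(* If c lies in none of the three sets below, then
   (x o y) * c = (x o y) o c = x o (y o c) = x o (y * c) = x * (y * c) = (x * y) * c,
   and cancelling c gives x o y = x * y. *)
Lemma card_le_dist_at_mul x y :
  o x y != s x y -> (#|T| <= d x + d y + d (o x y))%N.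
Proof.
move=> xy_diff.
pose D z := [set c | o z c != s z c].
have cover : [set: T] \subset D y :|: s y @^-1: D x :|: D (o x y).
  apply/subsetP => c _; rewrite !inE; apply: contraLR xy_diff.
  rewrite !negb_or !negbK => /andP[/andP[/eqP yc /eqP x_yc] /eqP xy_c].
  case: (Go) (Gs) => oA _ _ _ [sA _ _ _]; apply/eqP; apply: (group_mulIr Gs c).
  by rewrite /= -xy_c -oA yc x_yc sA.
rewrite -cardsT; apply: leq_trans (subset_leq_card cover) _.
apply: leq_trans (leq_card_setU _ _) _; rewrite leq_add2r.
apply: leq_trans (leq_card_setU _ _) _.
rewrite card_preimset; last exact: group_mulI Gs y.
by rewrite addnC.
Qed.

Lemma Tset_card_le x y :
  (x, y) \in Tset o s -> (#|T| <= d x + d y + d (o x y))%N.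
Proof. by rewrite !inE => /andP[xy_diff _]; exact: card_le_dist_at_mul. Qed.

End GroupPair.

Theorem lemma9p7 (T : finType) (o s : T -> T -> T) (e : T)
  (Go : is_group o e) (Gs : is_group s e) (Hdistinct : o <> s)
  (Hm : (3 <= mmin o s)%N)
  (l : nat) (Hl : (1 <= l)%N) (a : T) (b : 'I_l -> T)
  (Ha : a \in Kset o s) (Hb : forall i, b i \notin Kset o s)
  (Hbinj : injective b)
  (Hcase : (forall i, (a, b i) \in Tset o s) \/
           (exists a' : 'I_l -> T, forall i,
              [/\ a' i \in Kset o s, (a' i, b i) \in Tset o s & o (a' i) (b i) = a])) :
  profit o s >=
    (l%:Z * (#|T|%:Z - 2 * (qceil T)%:Z - (mmin o s)%:Z + 1)
     + (qceil T)%:Z - (mmin o s)%:Z - 1).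
Proof.
have b_neq_e i : b i != e.
  by apply: contraNneq (Hb i) => ->; exact: id_in_Kset Go Gs.
have id_of_mul_eq i x : o x (b i) = x -> b i = e := group_id_of_mul_eq Go x (b i).
case: Hcase => [abT | [a' a'T]].
- apply: (profit_ge_of_triples (c := fun i => o a (b i)) Hl Ha Hb Hbinj)
    => [i | i | i j /= | i].
  + exact: Tset_mul_in_Kset (abT i).
  + by apply: contraNneq (b_neq_e i) => /id_of_mul_eq ->.
  + by move/(group_mulI Go a)/Hbinj.
  + exact: (Tset_card_le Go Gs (abT i)).
- apply: (profit_ge_of_triples (c := a') Hl Ha Hb Hbinj)
    => [i | i | i j a'_ij | i].
  + by case: (a'T i).
  + apply: contraNneq (b_neq_e i) => a'_a; apply/eqP/(id_of_mul_eq _ a).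
    by case: (a'T i) => _ _; rewrite a'_a.
  + apply/Hbinj/(group_mulI Go (a' i)).
    by case: (a'T i) => _ _ ->; rewrite a'_ij; case: (a'T j) => _ _ ->.
  + by case: (a'T i) => _ /(Tset_card_le Go Gs) + a'b_a; rewrite a'b_a; lia.
Qed.
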